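(* Every second-order polynomial has a description.
   Context: Second-order polynomials are the smallest class of functions $P\colon\mathbb N^{\mathbb N}\times\mathbb N\to\mathbb N$ that contains all $(l,n)\mapsto p(n)$ for polynomials $p$ with natural-number coefficients, and is closed under pointwise sum, pointwise product, and $P\mapsto P^+$ with $P^+(l,n)=l(P(l,n))$. A polynomial tree is a finite rooted tree in which each node is labeled by a polynomial in $\mathbb N[X_0,\ldots,X_k]$, where $k$ is the number of children of that node, and the children of each node are linearly ordered. To each node one recursively assigns a function $\mathbb N^{\mathbb N}\times\mathbb N\to\mathbb N$: a leaf labeled $t\in\mathbb N[X_0]$ gets $(l,n)\mapsto t(n)$; a node labeled $t$ whose children (in order) were assigned $P_1,\ldots,P_k$ gets $(l,n)\mapsto t(n,l(P_1(l,n)),\ldots,l(P_k(l,n)))$. A polynomial tree is a description of $P$ if $P$ is assigned to its root. *)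

From Stdlib Require Import List Arith.
Import ListNotations.

(* Polynomials with natural-number coefficients, as syntactic expressions
   in variables X_0, X_1, ...  Every polynomial in N[X_0,...,X_k] is denoted
   by such an expression using only variables of index <= k, and conversely. *)
Inductive npoly : Type :=
| PConst : nat -> npoly
| PVar : nat -> npoly
| PAdd : npoly -> npoly -> npoly
| PMul : npoly -> npoly -> npoly.

Fixpoint vars_lt (m : nat) (p : npoly) : Prop :=
  match p with
  | PConst _ => True
  | PVar i => i < m
  | PAdd p q => vars_lt m p /\ vars_lt m q
  | PMul p q => vars_lt m p /\ vars_lt m q
  end.

(* evaluation at the point (x_0, x_1, ...) given as a list (missing = 0) *)
Fixpoint peval (p : npoly) (xs : list nat) : nat :=
  match p with
  | PConst c => c
  | PVar i => nth i xs 0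
  | PAdd p q => peval p xs + peval q xs
  | PMul p q => peval p xs * peval q xs
  end.

Definition SOfun := (nat -> nat) -> nat -> nat.

Inductive second_order_poly : SOfun -> Prop :=
| sop_poly (p : npoly) : vars_lt 1 p ->
    second_order_poly (fun l n => peval p [n])
| sop_add (P Q : SOfun) : second_order_poly P -> second_order_poly Q ->
    second_order_poly (fun l n => P l n + Q l n)
| sop_mul (P Q : SOfun) : second_order_poly P -> second_order_poly Q ->
    second_order_poly (fun l n => P l n * Q l n)
| sop_plus (P : SOfun) : second_order_poly P ->
    second_order_poly (fun l n => l (P l n)).

Inductive ptree : Type :=
| PNode : npoly -> list ptree -> ptree.

Fixpoint ptree_wf (t : ptree) : Prop :=
  match t with
  | PNode p ch => vars_lt (S (length ch)) p /\
      (fix all_wf (ts : list ptree) : Prop :=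
         match ts with
         | [] => True
         | u :: us => ptree_wf u /\ all_wf us
         end) ch
  end.

Fixpoint ptree_fun (t : ptree) (l : nat -> nat) (n : nat) : nat :=
  match t with
  | PNode p ch => peval p (n :: map (fun u => l (ptree_fun u l n)) ch)
  end.

Definition describes (t : ptree) (P : SOfun) : Prop :=
  ptree_wf t /\ forall l n, ptree_fun t l n = P l n.

(* A polynomial p(n) is described by a
   leaf, and P^+ by a root labelled X_1 whose only child describes P.  For P + Q
   and P * Q, take the roots of descriptions of P and Q, concatenate their lists of
   children and label the new root by the sum (product) of the two labels, after
   renumbering the variables X_1, X_2, ... of the second label so that they point
   past the children of the first root. *)

From Stdlib Require Import List Lia.
Import ListNotations.

Fixpoint shift_vars (k : nat) (p : npoly) : npoly :=
  match p with
  | PConst c => PConst c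
  | PVar 0 => PVar 0
  | PVar (S i) => PVar (S (k + i))
  | PAdd p q => PAdd (shift_vars k p) (shift_vars k q)
  | PMul p q => PMul (shift_vars k p) (shift_vars k q)
  end.

Lemma peval_shift_vars (p : npoly) (x : nat) (xs ys : list nat) :
  peval (shift_vars (length xs) p) (x :: xs ++ ys) = peval p (x :: ys).
Proof.
  induction p as [c | [|i] | p IHp q IHq | p IHp q IHq]; simpl;
    try rewrite IHp, IHq; try reflexivity.
  apply app_nth2_plus.
Qed.

Lemma vars_lt_shift_vars (k m : nat) (p : npoly) :
  vars_lt (S m) p -> vars_lt (S (k + m)) (shift_vars k p).
Proof.
  induction p as [c | [|i] | p IHp q IHq | p IHp q IHq]; simpl;
    intuition lia.
Qed.

Lemma vars_lt_le (m m' : nat) (p : npoly) :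
  m <= m' -> vars_lt m p -> vars_lt m' p.
Proof. induction p; simpl; intuition lia. Qed.

Lemma peval_app_vars_lt (p : npoly) (xs ys : list nat) :
  vars_lt (length xs) p -> peval p (xs ++ ys) = peval p xs.
Proof.
  induction p; simpl; intros Hp; try (destruct Hp; rewrite IHp1, IHp2 by assumption);
    try reflexivity.
  now apply app_nth1.
Qed.

Fixpoint ptrees_wf (ts : list ptree) : Prop :=
  match ts with
  | [] => True
  | u :: us => ptree_wf u /\ ptrees_wf us
  end.

Lemma ptree_wf_node (p : npoly) (ch : list ptree) :
  ptree_wf (PNode p ch) <-> vars_lt (S (length ch)) p /\ ptrees_wf ch.
Proof. reflexivity. Qed.

Lemma ptrees_wf_app (ts us : list ptree) :
  ptrees_wf ts -> ptrees_wf us -> ptrees_wf (ts ++ us).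
Proof. induction ts; simpl; tauto. Qed.

Section BinaryNode.

Variable op : npoly -> npoly -> npoly.
Variable f : nat -> nat -> nat.
Hypothesis vars_lt_op :
  forall m p q, vars_lt m p -> vars_lt m q -> vars_lt m (op p q).
Hypothesis peval_op :
  forall p q xs, peval (op p q) xs = f (peval p xs) (peval q xs).

Definition ptree_op (t u : ptree) : ptree :=
  match t, u with
  | PNode p ch, PNode q ch' => PNode (op p (shift_vars (length ch) q)) (ch ++ ch')
  end.

Lemma ptree_wf_op (t u : ptree) :
  ptree_wf t -> ptree_wf u -> ptree_wf (ptree_op t u).
Proof.
  destruct t as [p ch], u as [q ch'].
  rewrite !ptree_wf_node; intros [Hp Hch] [Hq Hch'].
  split; [| now apply ptrees_wf_app].
  rewrite length_app; apply vars_lt_op.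
  - apply (vars_lt_le (S (length ch))); [lia | assumption].
  - now apply vars_lt_shift_vars.
Qed.

Lemma ptree_fun_op (t u : ptree) (l : nat -> nat) (n : nat) :
  ptree_wf t -> ptree_fun (ptree_op t u) l n = f (ptree_fun t l n) (ptree_fun u l n).
Proof.
  destruct t as [p ch], u as [q ch']; rewrite ptree_wf_node; intros [Hp _]; simpl.
  rewrite peval_op, map_app.
  set (vs := map (fun u => l (ptree_fun u l n)) ch).
  assert (Hlen : length vs = length ch) by apply length_map.
  f_equal.
  - apply (peval_app_vars_lt p (n :: vs)); simpl; now rewrite Hlen.
  - rewrite <- Hlen; apply peval_shift_vars.
Qed.

Lemma describes_op (t u : ptree) (P Q : SOfun) :
  describes t P -> describes u Q ->
  describes (ptree_op t u) (fun l n => f (P l n) (Q l n)).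
Proof.
  intros [Ht HP] [Hu HQ]; split.
  - now apply ptree_wf_op.
  - intros l n; now rewrite ptree_fun_op, HP, HQ.
Qed.

End BinaryNode.

Lemma describes_poly (p : npoly) :
  vars_lt 1 p -> describes (PNode p []) (fun _ n => peval p [n]).
Proof. now split. Qed.

Lemma describes_plus (t : ptree) (P : SOfun) :
  describes t P -> describes (PNode (PVar 1) [t]) (fun l n => l (P l n)).
Proof.
  intros [Ht HP]; split.
  - simpl; auto.
  - intros l n; simpl; now rewrite HP.
Qed.

Theorem mainTheorem3 (P : (nat -> nat) -> nat -> nat) :
  second_order_poly P -> exists t : ptree, describes t P.
Proof.
  induction 1 as [p Hp | P Q _ [t Ht] _ [u Hu] | P Q _ [t Ht] _ [u Hu] | P _ [t Ht]].
  - exists (PNode p []); now apply describes_poly.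
  - exists (ptree_op PAdd t u); apply (describes_op PAdd Nat.add); simpl; auto.
  - exists (ptree_op PMul t u); apply (describes_op PMul Nat.mul); simpl; auto.
  - exists (PNode (PVar 1) [t]); now apply describes_plus.
Qed.
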